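(* Fix $R>0$, $\theta=2^{2R}-1$, and $a_2\in(0,1/(1+\theta))$ (with $a_1=1-a_2>a_2$). Let $P_{\mathrm{SC}}(\rho)$ be the SC outage probability defined below. Then $$-\lim_{\rho\to\infty}\frac{\log P_{\mathrm{SC}}(\rho)}{\log\rho}=\min\{m_{sd}N_d,\ m_{sr}N_r,\ m_{rd}N_d\}.$$
   Context: Let $N_r,N_d$ be positive integers, $m_{sr},m_{sd},m_{rd}$ positive integers, and $\Omega_{sr},\Omega_{sd},\Omega_{rd}>0$. Let $\{G_{sr,i}\}_{i=1}^{N_r}$, $\{G_{sd,j}\}_{j=1}^{N_d}$, $\{G_{rd,k}\}_{k=1}^{N_d}$ be mutually independent random variables, where each $G_{sr,i}$ has the Gamma density $\frac{(m_{sr}/\Omega_{sr})^{m_{sr}}x^{m_{sr}-1}}{\Gamma(m_{sr})}e^{-m_{sr}x/\Omega_{sr}}$, $x>0$, and analogously $G_{sd,j}$ with $(m_{sd},\Omega_{sd})$ and $G_{rd,k}$ with $(m_{rd},\Omega_{rd})$. SC gains: $g_{sr}=\max_i G_{sr,i}$, $g_{sd}=\max_j G_{sd,j}$, $g_{rd}=\max_k G_{rd,k}$. For $\rho>0$ the outage probability is $P_{\mathrm{SC}}(\rho)=1-\Pr\big(\tfrac{a_1\rho g_{sd}}{a_2\rho g_{sd}+1}\ge\theta\big)\Pr\big(\tfrac{a_1\rho g_{sr}}{a_2\rho g_{sr}+1}\ge\theta,\ a_2\rho g_{sr}\ge\theta\big)\Pr(\rho g_{rd}\ge\theta)$. *)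

From HB Require Import structures.
From mathcomp Require Import all_boot all_order all_algebra.
From mathcomp Require Import all_classical all_reals all_analysis.
Set Implicit Arguments. Unset Strict Implicit. Unset Printing Implicit Defensive.
Import Order.TTheory GRing.Theory Num.Theory.
Import numFieldNormedType.Exports.
Local Open Scope classical_set_scope.
Local Open Scope ring_scope.

Section Defs.
Variable R : realType.

(* Gamma (Nakagami-m power) density with integer shape m and mean Om;
   Gamma(m) = (m-1)!. *)
Definition gamma_pdf (m : nat) (Om : R) (x : R) : R :=
  if 0 < x then
    (m%:R / Om) ^+ m * x ^+ m.-1 / (m.-1)`!%:R * expR (- (m%:R * x / Om))
  else 0.

Context {d : measure_display} {T : measurableType d}.

Definition has_gamma_law (P : probability T R) (m : nat) (Om : R)
    (X : T -> R) : Prop :=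
  measurable_fun setT X /\
  forall A : set R, measurable A ->
    P (X @^-1` A) = (\int[lebesgue_measure]_(x in A) (gamma_pdf m Om x)%:E)%E.

Definition mutually_independent (P : probability T R) (I : finType)
    (X : I -> T -> R) : Prop :=
  forall B : I -> set R, (forall i, measurable (B i)) ->
    fine (P (\bigcap_i (X i @^-1` B i))) = \prod_(i : I) fine (P (X i @^-1` B i)).

Definition join3 (n1 n2 : nat) (X1 : 'I_n1 -> T -> R) (X2 X3 : 'I_n2 -> T -> R) :
    'I_n1 + ('I_n2 + 'I_n2) -> T -> R :=
  fun k => match k with
           | inl i => X1 i
           | inr (inl j) => X2 j
           | inr (inr j) => X3 j
           end.

Definition sc_max (n : nat) (X : 'I_n -> T -> R) (t : T) : R :=
  \big[Num.max/0]_(i < n) X i t.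

Definition prR (P : probability T R) (A : set T) : R := fine (P A).

Definition P_SC (P : probability T R) (a1 a2 theta : R) (Nr Nd : nat)
    (Gsr : 'I_Nr -> T -> R) (Gsd Grd : 'I_Nd -> T -> R) (rho : R) : R :=
  1 - prR P [set t | theta <= a1 * rho * sc_max Gsd t / (a2 * rho * sc_max Gsd t + 1)]
    * prR P [set t | theta <= a1 * rho * sc_max Gsr t / (a2 * rho * sc_max Gsr t + 1)
                     /\ theta <= a2 * rho * sc_max Gsr t]
    * prR P [set t | theta <= rho * sc_max Grd t].

End Defs.

From HB Require Import structures.
From mathcomp Require Import all_boot all_order all_algebra.
From mathcomp Require Import all_classical all_reals all_analysis.
From mathcomp Require Import ring lra.
Set Implicit Arguments. Unset Strict Implicit. Unset Printing Implicit Defensive.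
Import Order.TTheory GRing.Theory Num.Theory.
Import numFieldNormedType.Exports.
Import measurable_realfun.
Local Open Scope classical_set_scope.
Local Open Scope ring_scope.

(* Call a [0,1]-valued function f of the SNR rho "of outage order k" when,
   for large rho, lo * rho^-k <= f rho <= hi * rho^-k for constants
   lo, hi > 0.  Such an f satisfies ln (f rho) / ln rho --> -k.  If f and g
   have orders k and l, the "either fails" probability 1 - (1 - f)(1 - g) has
   order min k l, since it lies between max f g and f + g.

   The Gamma density is ~ K t^(m-1) near 0, so its CDF F satisfies
   c x^m <= F x <= K x^m on (0, 1].  For n independent Gamma branches,
   Pr(max_j G_j < C / rho) = F (C / rho) ^+ n, which therefore has outage
   order m * n.  Finally each of the three success events in the SC outage
   probability is a threshold event {C / rho <= sc_max G} for a suitable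
   constant C (this uses a1 - a2 theta > 0), so P_SC is the union outage of
   three hops of orders msd Nd, msr Nr and mrd Nd. *)

Section OutageOrder.
Variable R : realType.

Definition outage_order (f : R -> R) (k : nat) : Prop :=
  exists lo hi r0 : R, [/\ 0 < lo, 0 < hi &
    forall r, r0 < r -> 0 <= f r <= 1 /\ lo * r^-1 ^+ k <= f r <= hi * r^-1 ^+ k].

Lemma outage_order_eq (f g : R -> R) (k : nat) (r1 : R) :
  (forall r, r1 < r -> f r = g r) -> outage_order f k -> outage_order g k.
Proof.
move=> fg [lo [hi [r0 [lo0 hi0 Hf]]]].
exists lo, hi, (Num.max r0 r1); split => // r; rewrite gt_max => /andP[rr0 rr1].
by rewrite -fg //; exact: Hf.
Qed.

Lemma outage_order_log_limit (f : R -> R) (k : nat) : outage_order f k ->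
  (fun r => ln (f r) / ln r) @ +oo --> (- k%:R : R).
Proof.
move=> [lo [hi [r0 [lo0 hi0 Hf]]]]; apply/cvgrPdist_le => eps e0.
pose K := `|ln lo| + `|ln hi|.
exists (Num.max r0 (Num.max 1 (expR (K / eps)))); split; first exact: num_real.
move=> r; rewrite !gt_max => /and3P[hr0 hr1 hre].
have rp : 0 < r by apply: lt_trans hr1.
have lnr : 0 < ln r by rewrite ln_gt0.
have [_ /andP[hl hu]] := Hf r hr0.
have ln_bound c : 0 < c -> ln (c * r^-1 ^+ k) = ln c - k%:R * ln r.
  move=> c0; rewrite lnM ?posrE ?exprn_gt0 ?invr_gt0 //.
  by rewrite lnXn ?invr_gt0 // lnV ?posrE // -mulr_natl; ring.
have p1 : 0 < lo * r^-1 ^+ k by rewrite mulr_gt0 // exprn_gt0 // invr_gt0.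
have fp : 0 < f r by apply: lt_le_trans hl.
have h1 : ln lo - k%:R * ln r <= ln (f r) by rewrite -ln_bound // ler_ln.
have h2 : ln (f r) <= ln hi - k%:R * ln r.
  by rewrite -ln_bound // ler_ln // ?posrE (lt_le_trans fp).
have hK : K <= eps * ln r.
  rewrite -ler_pdivrMl // mulrC -[K / eps]expRK ler_ln ?posrE ?expR_gt0 //.
  exact: ltW.
have n1 := ler_norm (ln lo); have n1' := ler_norm (- ln lo); rewrite normrN in n1'.
have n2 := ler_norm (ln hi); have n2' := ler_norm (- ln hi); rewrite normrN in n2'.
have -> : - k%:R - ln (f r) / ln r = - ((ln (f r) + k%:R * ln r) / ln r).
  by field; rewrite gt_eqF.
rewrite normrN normrM normfV [`|ln r|]gtr0_norm // ler_pdivrMr //.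
apply: le_trans hK; rewrite ler_norml; apply/andP; split; rewrite /K; lra.
Qed.

Lemma outage_order_union (f g : R -> R) (k l : nat) :
  outage_order f k -> outage_order g l ->
  outage_order (fun r => 1 - (1 - f r) * (1 - g r)) (minn k l).
Proof.
move=> [lf [hf [rf [lf0 hf0 Hf]]]] [lg [hg [rg [lg0 hg0 Hg]]]].
exists (Num.min lf lg), (hf + hg), (Num.max 1 (Num.max rf rg)).
split; [by rewrite lt_min lf0 lg0 | by rewrite addr_gt0 |].
move=> r; rewrite !gt_max => /and3P[r1 rrf rrg].
have [/andP[f0 f1] /andP[lof hif]] := Hf r rrf.
have [/andP[g0 g1] /andP[log hig]] := Hg r rrg.
set x := r^-1 in lof hif log hig *.
have rp : 0 < r by apply: lt_trans r1.
have x0 : 0 <= x by rewrite invr_ge0 ltW.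
have x1 : x <= 1 by rewrite invf_le1 // ltW.
have f_le : f r <= 1 - (1 - f r) * (1 - g r) by nra.
have g_le : g r <= 1 - (1 - f r) * (1 - g r) by nra.
have le_sum : 1 - (1 - f r) * (1 - g r) <= f r + g r by nra.
split; first by apply/andP; split; nra.
apply/andP; split.
- case: leqP => _.
  + apply: le_trans f_le; apply: le_trans lof.
    by apply: ler_wpM2r; rewrite ?exprn_ge0 // ge_min lexx.
  + apply: le_trans g_le; apply: le_trans log.
    by apply: ler_wpM2r; rewrite ?exprn_ge0 // ge_min lexx orbT.
- apply: le_trans le_sum _; rewrite mulrDl; apply: lerD.
  + apply: le_trans hif _; apply: ler_wpM2l; first exact: ltW.
    by apply: (ler_wiXn2l x0 x1); rewrite geq_minl.
  + apply: le_trans hig _; apply: ler_wpM2l; first exact: ltW.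
    by apply: (ler_wiXn2l x0 x1); rewrite geq_minr.
Qed.

End OutageOrder.

Section GammaCDF.
Variable R : realType.
Implicit Types (m : nat) (Om x t : R).

Definition gamma_coef m Om : R := (m%:R / Om) ^+ m / (m.-1)`!%:R.

Definition gamma_cdf m Om x : R :=
  fine (\int[lebesgue_measure]_(t in `]-oo, x[) (gamma_pdf m Om t)%:E)%E.

Lemma gamma_coef_gt0 m Om : (0 < m)%N -> 0 < Om -> 0 < gamma_coef m Om.
Proof.
by move=> m0 O0; rewrite divr_gt0 // exprn_gt0 // divr_gt0 // ltr0n.
Qed.

Lemma gamma_pdf_measurable m Om : measurable_fun setT (gamma_pdf m Om).
Proof.
apply: measurable_fun_ifT; first exact: measurable_fun_ltr.
- apply: measurable_funM; last first.
    apply: measurableT_comp; first exact: measurable_expR.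
    apply: measurableT_comp; first exact: oppr_measurable.
    apply: measurable_funM; last exact: measurable_cst.
    by apply: measurable_funM; [exact: measurable_cst | exact: measurable_id].
  apply: measurable_funM; last exact: measurable_cst.
  apply: measurable_funM; first exact: measurable_cst.
  by apply: measurable_funX; exact: measurable_id.
- exact: measurable_cst.
Qed.

Lemma gamma_pdf_ge0 m Om x : 0 < Om -> 0 <= gamma_pdf m Om x.
Proof.
move=> O0; rewrite /gamma_pdf; case: ifP => // x0.
apply: mulr_ge0; last exact: expR_ge0.
by rewrite mulr_ge0 ?invr_ge0 // mulr_ge0 // exprn_ge0 // ?divr_ge0 // ltW.
Qed.

Lemma gamma_pdf_pos m Om t : 0 < t ->
  gamma_pdf m Om t = gamma_coef m Om * t ^+ m.-1 * expR (- (m%:R * t / Om)).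
Proof. by move=> t0; rewrite /gamma_pdf t0 /gamma_coef; ring. Qed.

Lemma gamma_pdf_le m Om x t : (0 < m)%N -> 0 < Om -> 0 < t -> t <= x ->
  gamma_pdf m Om t <= gamma_coef m Om * x ^+ m.-1.
Proof.
move=> m0 O0 t0 tx; rewrite gamma_pdf_pos //.
have K0 := ltW (gamma_coef_gt0 m0 O0).
have e1 : expR (- (m%:R * t / Om)) <= 1.
  by rewrite expR_le1 oppr_le0 divr_ge0 ?mulr_ge0 // ltW.
have Kt0 : 0 <= gamma_coef m Om * t ^+ m.-1 by rewrite mulr_ge0 // exprn_ge0 // ltW.
rewrite -[leRHS]mulr1; apply: ler_pM => //.
by rewrite ler_wpM2l // lerXn2r // nnegrE ltW // (lt_le_trans t0).
Qed.

Lemma gamma_pdf_ge m Om x t : (0 < m)%N -> 0 < Om -> 0 < x -> x <= 1 ->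
  x / 2 <= t -> t <= x ->
  gamma_coef m Om * (x / 2) ^+ m.-1 * expR (- (m%:R / Om)) <= gamma_pdf m Om t.
Proof.
move=> m0 O0 x0 x1 lt tx.
have x20 : 0 < x / 2 by rewrite divr_gt0.
have t0 : 0 < t by apply: lt_le_trans lt.
have K0 := ltW (gamma_coef_gt0 m0 O0).
rewrite gamma_pdf_pos //; apply: ler_pM.
- by rewrite mulr_ge0 // exprn_ge0 // ltW.
- exact: expR_ge0.
- by rewrite ler_wpM2l // lerXn2r // nnegrE ltW.
- rewrite ler_expR lerN2; apply: ler_wpM2r; first by rewrite invr_ge0 ltW.
  by rewrite -[leRHS]mulr1 ler_wpM2l // (le_trans tx).
Qed.

(* the density vanishes on ]-oo, 0] *)
Lemma gamma_cdf_integral_pos m Om x : 0 < x ->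
  (\int[lebesgue_measure]_(t in `]-oo, x[) (gamma_pdf m Om t)%:E =
   \int[lebesgue_measure]_(t in `]0%R, x[) (gamma_pdf m Om t)%:E)%E.
Proof.
move=> x0; rewrite integral_mkcond [RHS]integral_mkcond.
apply: eq_integral => t _; rewrite /patch.
have mem_itv (i : interval R) : (t \in [set` i]) = (t \in i).
  by apply/idP/idP => [/set_mem|/mem_set].
rewrite !mem_itv !in_itv /=.
case: (ltP 0 t) => t0 //=; case: (ltP t x) => //= _.
by rewrite /gamma_pdf ltNge t0.
Qed.

Lemma gamma_cdf_integral_le m Om x : (0 < m)%N -> 0 < Om -> 0 < x ->
  (\int[lebesgue_measure]_(t in `]-oo, x[) (gamma_pdf m Om t)%:E <=
   (gamma_coef m Om * x ^+ m)%:E)%E.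
Proof.
move=> m0 O0 x0; rewrite gamma_cdf_integral_pos //.
apply: (@le_trans _ _ (\int[lebesgue_measure]_(t in `]0%R, x[)
    (cst (gamma_coef m Om * x ^+ m.-1)%:E t))%E).
  apply: ge0_le_integral => //.
  - by move=> t _; rewrite lee_fin gamma_pdf_ge0.
  - by apply/measurable_EFinP; apply: measurable_funS (gamma_pdf_measurable m Om).
  - move=> t /=; rewrite in_itv /= => /andP[t0 tx].
    by rewrite lee_fin gamma_pdf_le // ltW.
rewrite integral_cst // [X in (_ * X <= _)%E]lebesgue_measure_itv /= lte_fin x0.
by rewrite -EFinB -EFinM subr0 -mulrA -exprSr (prednK m0).
Qed.

Lemma gamma_cdf_integral_ge m Om x : (0 < m)%N -> 0 < Om -> 0 < x -> x <= 1 ->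
  ((gamma_coef m Om * expR (- (m%:R / Om)) * 2^-1 ^+ m * x ^+ m)%:E <=
   \int[lebesgue_measure]_(t in `]-oo, x[) (gamma_pdf m Om t)%:E)%E.
Proof.
move=> m0 O0 x0 x1.
have x20 : 0 < x / 2 by rewrite divr_gt0.
pose c := gamma_coef m Om * (x / 2) ^+ m.-1 * expR (- (m%:R / Om)).
have c0 : 0 <= c.
  rewrite mulr_ge0 ?expR_ge0 // mulr_ge0 ?exprn_ge0 //; last exact: ltW.
  exact: ltW (gamma_coef_gt0 m0 O0).
apply: (@le_trans _ _ (\int[lebesgue_measure]_(t in `[(x / 2)%R, x[)
    (gamma_pdf m Om t)%:E)%E); last first.
  apply: ge0_subset_integral => //.
  - by apply/measurable_EFinP; apply: measurable_funS (gamma_pdf_measurable m Om).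
  - by move=> t _; rewrite lee_fin gamma_pdf_ge0.
  - by move=> t /=; rewrite !in_itv /= => /andP[_ ->].
apply: (@le_trans _ _ (\int[lebesgue_measure]_(t in `[(x / 2)%R, x[)
    (cst c%:E t))%E); last first.
  apply: ge0_le_integral => //.
  - by apply/measurable_EFinP; apply: measurable_funS (gamma_pdf_measurable m Om).
  - move=> t /=; rewrite in_itv /= => /andP[t0 tx].
    by rewrite lee_fin gamma_pdf_ge // ltW.
have x2 : x / 2 < x by rewrite ltr_pdivrMr // ltr_pMr // ltr1n.
rewrite integral_cst // [X in (_ <= _ * X)%E]lebesgue_measure_itv /= lte_fin x2.
rewrite -EFinB -EFinM lee_fin.
have pow_pred (y : R) : y ^+ m = y ^+ m.-1 * y by rewrite -exprSr (prednK m0).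
have half : x - x / 2 = x / 2 by rewrite {1}(splitr x) addrK.
rewrite half /c (pow_pred x) (pow_pred 2^-1) exprMn le_eqVlt; apply/orP; left.
by apply/eqP; ring.
Qed.

Lemma gamma_cdf_bounds m Om x : (0 < m)%N -> 0 < Om -> 0 < x -> x <= 1 ->
  gamma_coef m Om * expR (- (m%:R / Om)) * 2^-1 ^+ m * x ^+ m
    <= gamma_cdf m Om x <= gamma_coef m Om * x ^+ m.
Proof.
move=> m0 O0 x0 x1; rewrite /gamma_cdf.
move: (gamma_cdf_integral_ge m0 O0 x0 x1) (gamma_cdf_integral_le m0 O0 x0).
by case: (\int[_]_(_ in _) _)%E => [v| |] //=; rewrite !lee_fin => -> ->.
Qed.

End GammaCDF.

Section SelectionCombining.
Variables (R : realType) (d : measure_display) (T : measurableType d).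
Variable P : probability T R.

Lemma mutually_independent_inl (I1 I2 : finType) (X : I1 + I2 -> T -> R) :
  mutually_independent P X -> mutually_independent P (fun i => X (inl i)).
Proof.
move=> H B mB.
pose B' (k : I1 + I2) := if k is inl i then B i else setT.
have := H B' (ltac:(by case => // ?; exact: measurableT)).
have -> : \bigcap_k X k @^-1` B' k = \bigcap_i X (inl i) @^-1` B i.
  apply/seteqP; split => t /= Ht; first by move=> i _; exact: (Ht (inl i)).
  by case => [i|j] _ //=; exact: Ht.
move=> ->; rewrite big_sumType /= [X in _ * X]big1 ?mulr1 // => j _.
by rewrite preimage_setT probability_setT.
Qed.

Lemma mutually_independent_inr (I1 I2 : finType) (X : I1 + I2 -> T -> R) :
  mutually_independent P X -> mutually_independent P (fun i => X (inr i)).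
Proof.
move=> H B mB.
pose B' (k : I1 + I2) := if k is inr i then B i else setT.
have := H B' (ltac:(by case => // ?; exact: measurableT)).
have -> : \bigcap_k X k @^-1` B' k = \bigcap_i X (inr i) @^-1` B i.
  apply/seteqP; split => t /= Ht; first by move=> i _; exact: (Ht (inr i)).
  by case => [i|j] _ //=; exact: Ht.
move=> ->; rewrite big_sumType /= [X in X * _]big1 ?mul1r // => j _.
by rewrite preimage_setT probability_setT.
Qed.

Lemma sc_max_ge0 n (X : 'I_n -> T -> R) t : 0 <= sc_max X t.
Proof. by rewrite /sc_max; elim/big_rec: _ => // i x _ hx; rewrite le_max hx orbT. Qed.

Lemma sc_max_event n (X : 'I_n -> T -> R) c : 0 < c ->
  [set t | c <= sc_max X t] = ~` \bigcap_j (X j @^-1` `]-oo, c[).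
Proof.
move=> c0; apply/seteqP; split => t /=.
- move=> h below; move: h; apply/negP; rewrite -ltNge /sc_max.
  by elim/big_ind: _ => // [x y hx hy|j _]; rewrite ?gt_max ?hx ?hy //; have := below j I.
- move=> h; rewrite leNgt; apply/negP => hlt; apply: h => j _ /=.
  rewrite in_itv /=; apply: le_lt_trans hlt; rewrite /sc_max.
  by rewrite (bigD1 j) //= le_max lexx.
Qed.

Lemma sc_max_success n (X : 'I_n -> T -> R) m (Om c : R) : 0 < c ->
  (forall j, has_gamma_law P m Om (X j)) -> mutually_independent P X ->
  prR P [set t | c <= sc_max X t] = 1 - gamma_cdf m Om c ^+ n
  /\ gamma_cdf m Om c ^+ n <= 1.
Proof.
move=> c0 hlaw hind.
have mpre j : measurable (X j @^-1` `]-oo, c[).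
  by rewrite -[_ @^-1` _]setTI; apply: (hlaw j).1.
have mI : measurable (\bigcap_j (X j @^-1` `]-oo, c[)).
  by apply: fin_bigcap_measurable => //; exact: finite_finset.
have all_below : fine (P (\bigcap_j (X j @^-1` `]-oo, c[))) = gamma_cdf m Om c ^+ n.
  rewrite hind // (eq_bigr (fun _ => gamma_cdf m Om c)) ?prodr_const ?card_ord //.
  by move=> j _; rewrite (hlaw j).2.
rewrite /prR sc_max_event // probability_setC // fineB ?fin_num_measure // all_below.
split => //; rewrite -all_below -lee_fin fineK ?fin_num_measure //.
exact: probability_le1.
Qed.

Lemma sc_outage_order n (X : 'I_n -> T -> R) m (Om C : R) :
  (0 < m)%N -> 0 < Om -> 0 < C ->
  (forall j, has_gamma_law P m Om (X j)) -> mutually_independent P X ->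
  outage_order (fun rho => 1 - prR P [set t | C / rho <= sc_max X t]) (m * n).
Proof.
move=> m0 O0 C0 hlaw hind.
pose lo := gamma_coef m Om * expR (- (m%:R / Om)) * 2^-1 ^+ m.
have K0 := gamma_coef_gt0 m0 O0.
have lo0 : 0 < lo.
  by apply: mulr_gt0; [rewrite mulr_gt0 // expR_gt0 | rewrite exprn_gt0 // invr_gt0].
exists ((lo * C ^+ m) ^+ n), ((gamma_coef m Om * C ^+ m) ^+ n), (Num.max 1 C).
split; [by rewrite exprn_gt0 // mulr_gt0 // exprn_gt0 .. |].
move=> rho; rewrite gt_max => /andP[r1 rC].
have r0 : 0 < rho by apply: lt_trans r1.
have x0 : 0 < C / rho by rewrite divr_gt0.
have x1 : C / rho <= 1 by rewrite ler_pdivrMr // mul1r ltW.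
have [-> F1] := sc_max_success x0 hlaw hind; rewrite subKr.
have [Flo Fhi] := andP (gamma_cdf_bounds m0 O0 x0 x1).
have scale k : (k * C ^+ m) ^+ n * rho^-1 ^+ (m * n) = (k * (C / rho) ^+ m) ^+ n.
  by rewrite exprM -exprMn -mulrA -exprMn.
have lo_ge0 : 0 <= lo * (C / rho) ^+ m by rewrite mulr_ge0 ?exprn_ge0 // ltW.
have F0 : 0 <= gamma_cdf m Om (C / rho) by apply: le_trans Flo.
rewrite -/lo in Flo; rewrite !scale.
split; first by rewrite F1 andbT exprn_ge0.
by apply/andP; split; apply: lerXn2r; rewrite ?nnegrE // (le_trans F0).
Qed.

End SelectionCombining.

Section Events.
Variables (R : realType) (T : Type).
Implicit Types (g : T -> R) (theta rho : R).

Lemma sinr_threshold theta (a1 a2 : R) rho (x : R) :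
  0 < a1 - a2 * theta -> 0 < a2 -> 0 < rho -> 0 <= x ->
  (theta <= a1 * rho * x / (a2 * rho * x + 1)) = (theta / (a1 - a2 * theta) / rho <= x).
Proof.
move=> D0 a0 r0 x0.
have den : 0 < a2 * rho * x + 1 by rewrite ltr_wpDl // !mulr_ge0 // ltW.
by rewrite ler_pdivlMr // !ler_pdivrMr //; apply/idP/idP => h; nra.
Qed.

Lemma sinr_event theta (a1 a2 : R) rho g : 0 < a1 - a2 * theta -> 0 < a2 -> 0 < rho ->
  (forall t, 0 <= g t) ->
  [set t | theta <= a1 * rho * g t / (a2 * rho * g t + 1)]
    = [set t | theta / (a1 - a2 * theta) / rho <= g t].
Proof.
by move=> D0 a0 r0 g0; apply/seteqP; split => t /=; rewrite sinr_threshold.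
Qed.

Lemma scaled_threshold (theta a rho x : R) : 0 < a -> 0 < rho ->
  (theta <= a * rho * x) = (theta / a / rho <= x).
Proof. by move=> a0 r0; rewrite !ler_pdivrMr //; congr (_ <= _); ring. Qed.

Lemma max_threshold (b c rho x : R) : 0 < rho ->
  (Num.max b c / rho <= x) = (b / rho <= x) && (c / rho <= x).
Proof. by move=> r0; rewrite !ler_pdivrMr // ge_max. Qed.

Lemma relay_event theta (a1 a2 : R) rho g : 0 < a1 - a2 * theta -> 0 < a2 -> 0 < rho ->
  (forall t, 0 <= g t) ->
  [set t | theta <= a1 * rho * g t / (a2 * rho * g t + 1) /\ theta <= a2 * rho * g t]
    = [set t | Num.max (theta / (a1 - a2 * theta)) (theta / a2) / rho <= g t].
Proof.
move=> D0 a0 r0 g0; apply/seteqP; split => t /=.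
all: rewrite sinr_threshold // scaled_threshold // max_threshold //.
- by case=> -> ->.
- by case/andP=> -> ->.
Qed.

Lemma snr_event theta rho g : 0 < rho ->
  [set t | theta <= rho * g t] = [set t | theta / rho <= g t].
Proof. by move=> r0; apply/seteqP; split => t /=; rewrite ler_pdivrMr // mulrC. Qed.

End Events.

Lemma rate_threshold_gt0 (R : realType) (Rt : R) : 0 < Rt -> 0 < 2 `^ (2 * Rt) - 1.
Proof.
move=> R0; rewrite subr_gt0.
have two0 : (0 : R) < 2 by [].
rewrite -[X in X `^ _](lnK two0) -expRM expR_gt1 mulr_gt0 // ?mulr_gt0 //.
by rewrite ln_gt0 // ltr1n.
Qed.

Lemma power_margin_gt0 (R : realType) (theta a2 : R) : 0 < theta ->
  a2 < 1 / (1 + theta) -> 0 < (1 - a2) - a2 * theta.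
Proof.
by move=> th0; rewrite ltr_pdivlMr; [move=> h; lra | rewrite addr_gt0].
Qed.

Theorem mainTheorem10 (R : realType) (d : measure_display) (T : measurableType d)
    (P : probability T R)
    (Nr Nd msr msd mrd : nat) (Osr Osd Ord : R)
    (Gsr : 'I_Nr -> T -> R) (Gsd Grd : 'I_Nd -> T -> R)
    (Rt a2 : R) :
  (0 < Nr)%N -> (0 < Nd)%N -> (0 < msr)%N -> (0 < msd)%N -> (0 < mrd)%N ->
  0 < Osr -> 0 < Osd -> 0 < Ord ->
  (forall i, has_gamma_law P msr Osr (Gsr i)) ->
  (forall j, has_gamma_law P msd Osd (Gsd j)) ->
  (forall k, has_gamma_law P mrd Ord (Grd k)) ->
  mutually_independent P (join3 Gsr Gsd Grd) ->
  0 < Rt ->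
  let theta := 2 `^ (2 * Rt) - 1 in
  0 < a2 -> a2 < 1 / (1 + theta) ->
  let a1 := 1 - a2 in
  (fun rho => ln (P_SC P a1 a2 theta Gsr Gsd Grd rho) / ln rho) @ +oo%R
    --> (- (minn (msd * Nd) (minn (msr * Nr) (mrd * Nd)))%:R : R).
Proof.
move=> _ _ msr0 msd0 mrd0 Osr0 Osd0 Ord0 lsr lsd lrd hind Rt0 theta a20 a2lt a1.
have th0 : 0 < theta := rate_threshold_gt0 Rt0.
have D0 : 0 < a1 - a2 * theta := power_margin_gt0 th0 a2lt.
have Csd0 : 0 < theta / (a1 - a2 * theta) by rewrite divr_gt0.
have Csr0 : 0 < Num.max (theta / (a1 - a2 * theta)) (theta / a2) by rewrite lt_max Csd0.
have Hsd := sc_outage_order msd0 Osd0 Csd0 lsd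
  (mutually_independent_inl (mutually_independent_inr hind)).
have Hsr := sc_outage_order msr0 Osr0 Csr0 lsr (mutually_independent_inl hind).
have Hrd := sc_outage_order mrd0 Ord0 th0 lrd
  (mutually_independent_inr (mutually_independent_inr hind)).
apply: outage_order_log_limit.
apply: (outage_order_eq (r1 := 0)) (outage_order_union Hsd (outage_order_union Hsr Hrd)).
move=> rho rho0 /=; rewrite /P_SC sinr_event ?relay_event ?snr_event //;
  try exact: sc_max_ge0.
by ring.
Qed.
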